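(* There is an algorithm which, on input a prime $p$ and a primitive root $g$ modulo $p$ with $1<g<p$, computes every value $q_p(u)$, $0\le u<p-1$, using $O(p)$ arithmetic operations on $O(\log p)$-bit integers.
   Context: For a prime $p$ and an integer $u$ with $\gcd(u,p)=1$, the Fermat quotient $q_p(u)$ is the unique integer with $q_p(u)\equiv (u^{p-1}-1)/p \pmod p$ and $0\le q_p(u)\le p-1$; also $q_p(kp)=0$ for all $k\in\mathbb{Z}$. *)

From mathcomp Require Import all_boot.
Set Implicit Arguments. Unset Strict Implicit. Unset Printing Implicit Defensive.

(* q_p(u) = ((u^(p-1) - 1)/p) mod p for p not dividing u (the division is exact
   when p is prime and gcd(u,p)=1, by Fermat); q_p(kp) = 0. *)
Definition fermat_quotient (p u : nat) : nat :=
  if p %| u then 0 else ((u ^ p.-1 - 1) %/ p) %% p.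

Definition primitive_root_mod (p g : nat) : Prop :=
  coprime g p /\ g ^ totient p = 1 %[mod p] /\
  (forall k, 0 < k -> k < totient p -> g ^ k %% p <> 1 %% p).

(* Each executed instruction
   is one arithmetic operation (unit cost).  Word sizes are controlled
   separately by bounding every value ever held in memory. *)
Inductive binop := OAdd | OSub | OMul | ODiv | OMod.

Definition eval_op (o : binop) (a b : nat) : nat :=
  match o with
  | OAdd => a + b | OSub => a - b | OMul => a * b
  | ODiv => a %/ b | OMod => a %% b
  end.

Inductive instr :=
  | IConst (i c : nat)
  | IOp (o : binop) (i j k : nat)
  | ILoad (i j : nat)
  | IStore (i j : nat)
  | IJlt (i j l : nat)
  | IJmp (l : nat)
  | IHalt.                        (* stop (also: pc outside the program)  *)

Record state := State { pc : nat; cells : nat -> nat }.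

Definition upd (m : nat -> nat) (a v : nat) : nat -> nat :=
  fun x => if x == a then v else m x.

Definition step (P : seq instr) (s : state) : option state :=
  let m := cells s in
  let n := (pc s).+1 in
  match nth IHalt P (pc s) with
  | IConst i c => Some (State n (upd m i c))
  | IOp o i j k => Some (State n (upd m i (eval_op o (m j) (m k))))
  | ILoad i j => Some (State n (upd m i (m (m j))))
  | IStore i j => Some (State n (upd m (m i) (m j)))
  | IJlt i j l => Some (State (if m i < m j then l else n) m)
  | IJmp l => Some (State l m)
  | IHalt => None
  end.

Definition run (P : seq instr) (k : nat) (s : state) : state :=
  iter k (fun t => odflt t (step P t)) s.

(* Input convention: cells[0] = p, cells[1] = g, all other cells 0, pc = 0.
   Output convention: on halting, cell cells[2] holds a base address b and
   cells[b + u] holds the u-th output. *)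
Definition init (p g : nat) : state :=
  State 0 (fun a => if a == 0 then p else if a == 1 then g else 0).

From mathcomp Require Import all_boot zify cyclic.
Set Implicit Arguments. Unset Strict Implicit. Unset Printing Implicit Defensive.

(* For x = g^j mod p we have g^(pj) = x^p (mod p^2), and x^p = x (1 + p q_p(x)),
   so x^p mod p^2 = x + p ((x q_p(x)) mod p).  Since g^((p-2)j) is an inverse of x
   modulo p, this gives q_p(x) = ((g^(pj) mod p^2 - x) / p) g^((p-2)j) mod p.  The
   program keeps the three residues g^j mod p, g^(pj) mod p^2 and g^((p-2)j) mod p,
   each updated by one multiplication per value of j, and writes q_p(x) to the
   table; as j runs through 0, ..., p-2, x runs through all nonzero residues
   because g is a primitive root.  Every product multiplies two numbers at most
   p^2, so no value exceeds p^4. *)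

Lemma expnD_second_order r c n :
  exists t, (r + c) ^ n = r ^ n + n * r ^ n.-1 * c + c * c * t.
Proof.
elim: n => [|n [t IH]]; first by exists 0; rewrite muln0 addn0.
exists (r * t + n * r ^ n.-1 + c * t); rewrite expnS IH.
have rn : n * r ^ n.-1 * r = n * r ^ n by case: n {IH} => //= n; rewrite -mulnA -expnSr.
rewrite expnS; move: rn; set X := r ^ n; set W := r ^ n.-1 => rn; nia.
Qed.

Lemma expn_mod_sqr a b m : a = b %[mod m] -> a ^ m = b ^ m %[mod m * m].
Proof.
suff reduce c : c ^ m = (c %% m) ^ m %[mod m * m].
  by move=> eq_ab; rewrite reduce eq_ab -reduce.
rewrite {1}(divn_eq c m) addnC.
have [t ->] := expnD_second_order (c %% m) (c %/ m * m) m.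
rewrite -addnA.
have -> : m * (c %% m) ^ m.-1 * (c %/ m * m) + c %/ m * m * (c %/ m * m) * t
    = ((c %% m) ^ m.-1 * (c %/ m) + c %/ m * (c %/ m) * t) * (m * m) by nia.
by rewrite addnC modnMDl.
Qed.

Lemma fermat_little p a : prime p -> coprime a p -> a ^ p.-1 = 1 %[mod p].
Proof. by move=> pr_p co_ap; rewrite -totient_prime // Euler_exp_totient. Qed.

Lemma fermat_quotient_ltn p u : 0 < p -> fermat_quotient p u < p.
Proof. by move=> p_gt0; rewrite /fermat_quotient; case: ifP; rewrite ?ltn_mod. Qed.

Section FermatQuotient.
Variables p u : nat.
Hypotheses (pr_p : prime p) (u_gt0 : 0 < u) (u_lt_p : u < p).

Let p_gt0 : 0 < p := prime_gt0 pr_p.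
Let p_ndvd_u : ~~ (p %| u) := negbT (gtnNdvd u_gt0 u_lt_p).

Lemma expn_prime_mod_sqr :
  u ^ p %% (p * p) = u + (u * fermat_quotient p u) %% p * p.
Proof.
set Q := (u ^ p.-1 - 1) %/ p.
have def_up1 : u ^ p.-1 = Q * p + 1.
  have u_p1_gt0 : 0 < u ^ p.-1 by rewrite expn_gt0 u_gt0.
  have co_up : coprime u p by rewrite coprime_sym prime_coprime.
  have : p %| u ^ p.-1 - 1 by rewrite -eqn_mod_dvd // fermat_little.
  by rewrite /Q => /divnK ->; rewrite subnK.
have def_up : u ^ p = u + u * Q * p.
  by rewrite -[in u ^ p](prednK p_gt0) expnS def_up1 mulnDr muln1 mulnA addnC.
rewrite def_up {1}(divn_eq (u * Q) p) mulnDl -mulnA addnCA modnMDl modn_small.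
  by rewrite /fermat_quotient (negbTE p_ndvd_u) modnMmr.
have R_lt_p : (u * Q) %% p < p by rewrite ltn_mod.
nia.
Qed.

Lemma fermat_quotient_expn_prime v : u * v = 1 %[mod p] ->
  ((u ^ p %% (p * p) - u) %/ p * v) %% p = fermat_quotient p u.
Proof.
move=> uv1; rewrite expn_prime_mod_sqr addKn mulnK //.
by rewrite modnMml mulnAC -modnMml uv1 modnMml mul1n modn_small // fermat_quotient_ltn.
Qed.

End FermatQuotient.

Lemma expn_mod_cancel g n i j : 0 < g -> coprime g n -> i <= j ->
  g ^ i = g ^ j %[mod n] -> g ^ (j - i) = 1 %[mod n].
Proof.
move=> g_gt0 co_gn le_ij /eqP; rewrite eq_sym.
have def_gj : g ^ j = g ^ i * g ^ (j - i) by rewrite -expnD subnKC.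
have gji_gt0 : 0 < g ^ (j - i) by rewrite expn_gt0 g_gt0.
rewrite eqn_mod_dvd; last by rewrite def_gj leq_pmulr.
rewrite def_gj -{2}(muln1 (g ^ i)) -mulnBr Gauss_dvdr; last first.
  by rewrite coprime_sym coprimeXl.
by rewrite -eqn_mod_dvd // => /eqP.
Qed.

Lemma coprime_mod_gt0 a n : 1 < n -> coprime a n -> 0 < a %% n.
Proof.
move=> n_gt1; rewrite -coprime_modl lt0n; apply: contraTneq => ->.
by rewrite /coprime gcd0n (gtn_eqF n_gt1).
Qed.

Lemma primitive_root_powers p g : prime p -> primitive_root_mod p g ->
  [seq g ^ j %% p | j <- iota 0 p.-1] =i iota 1 p.-1.
Proof.
move=> pr_p [co_gp [_]]; rewrite totient_prime // => g_min.
have p_gt0 := prime_gt0 pr_p.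
have g_gt0 : 0 < g.
  by case: g co_gp {g_min} => // /eqP; rewrite gcd0n => p1; rewrite p1 in pr_p.
have inj_pow : {in iota 0 p.-1 &, injective (fun j => g ^ j %% p)}.
  suff lt_pow i j : i < j < p.-1 -> g ^ i %% p != g ^ j %% p.
    move=> i j; rewrite !mem_iota !add0n /= => lt_ip lt_jp /eqP eq_ij.
    case: (ltngtP i j) => [lt_ij|lt_ji|//].
    - by move: (lt_pow i j); rewrite lt_ij lt_jp eq_ij => /(_ isT).
    - by move: (lt_pow j i); rewrite lt_ji lt_ip eq_sym eq_ij => /(_ isT).
  case/andP=> lt_ij lt_jp; apply/eqP=> /(expn_mod_cancel g_gt0 co_gp (ltnW lt_ij)).
  apply: g_min; first by rewrite subn_gt0.
  exact: leq_ltn_trans (leq_subr i j) lt_jp.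
apply: (uniq_min_size _ _ _).2.
- by rewrite map_inj_in_uniq // iota_uniq.
- move=> _ /mapP [j _ ->].
  rewrite mem_iota (coprime_mod_gt0 (prime_gt1 pr_p) (coprimeXl j co_gp)).
  by rewrite add1n prednK // ltn_mod.
- by rewrite size_map !size_iota.
Qed.

Lemma fermat_quotient_power p g j : prime p -> coprime g p ->
  ((g ^ (p * j) %% (p * p) - g ^ j %% p) %/ p * (g ^ ((p - 2) * j) %% p)) %% p
  = fermat_quotient p (g ^ j %% p).
Proof.
move=> pr_p co_gp; set u := g ^ j %% p.
have p_gt1 := prime_gt1 pr_p.
have u_gt0 : 0 < u := coprime_mod_gt0 p_gt1 (coprimeXl j co_gp).
have u_lt_p : u < p by rewrite ltn_mod prime_gt0.
have -> : g ^ (p * j) %% (p * p) = u ^ p %% (p * p).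
  by rewrite mulnC expnM; apply: expn_mod_sqr; rewrite modn_mod.
apply: fermat_quotient_expn_prime => //.
rewrite modnMml modnMmr -expnD -mulSn -subSn // subSS subn1.
by rewrite expnM -modnXm fermat_little // modnXm exp1n.
Qed.

Section Run.
Variable P : seq instr.

Definition next (s : state) : state := odflt s (step P s).

Lemma run_succ n s : run P n.+1 s = run P n (next s).
Proof. by rewrite /run iterSr. Qed.

Lemma run_add m n s : run P (m + n) s = run P n (run P m s).
Proof. by rewrite /run addnC iterD. Qed.

Lemma next_ext s t : pc s = pc t -> cells s =1 cells t ->
  pc (next s) = pc (next t) /\ cells (next s) =1 cells (next t).
Proof.
case: s t => l m [_ m'] /= <- eq_m; rewrite /next /step /=.
by case: (nth IHalt P l) => * /=; rewrite ?eq_m; split=> // x; rewrite /upd !eq_m.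
Qed.

Lemma run_ext n s t : pc s = pc t -> cells s =1 cells t ->
  pc (run P n s) = pc (run P n t) /\ cells (run P n s) =1 cells (run P n t).
Proof.
elim: n s t => [//|n IHn] s t eq_pc eq_m; rewrite !run_succ.
by have [] := next_ext eq_pc eq_m; apply: IHn.
Qed.

Definition bounded (B : nat) (m : nat -> nat) := forall a, m a <= B.

Lemma upd_bounded B m a v : bounded B m -> v <= B -> bounded B (upd m a v).
Proof. by move=> bnd_m le_vB x; rewrite /upd; case: eqP. Qed.

Definition safe_run B n (Post : state -> Prop) s :=
  Post (run P n s) /\ forall k, k < n -> bounded B (cells (run P k s)).

Definition hoare B n (Pre Post : state -> Prop) :=
  forall s, Pre s -> safe_run B n Post s.

Lemma safe_run0 B (Post : state -> Prop) s : Post s -> safe_run B 0 Post s.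
Proof. by []. Qed.

Lemma safe_runS B n Post s :
  bounded B (cells s) -> safe_run B n Post (next s) -> safe_run B n.+1 Post s.
Proof.
move=> bnd_s [post_n bnd_n]; split; first by rewrite run_succ.
by case=> [|k] // lt_kn; rewrite run_succ; apply: bnd_n.
Qed.

Lemma hoare_seq B m n Pre Mid Post :
  hoare B m Pre Mid -> hoare B n Mid Post -> hoare B (m + n) Pre Post.
Proof.
move=> hPM hMQ s /hPM [/hMQ [post bnd_n] bnd_m]; split; first by rewrite run_add.
move=> k lt_k; case: (ltnP k m) => [/bnd_m //|le_mk].
by rewrite -(subnKC le_mk) run_add; apply: bnd_n; rewrite ltn_subLR.
Qed.

Lemma hoare_iter B c N (Inv : nat -> state -> Prop) :
  (forall i, i < N -> hoare B c (Inv i) (Inv i.+1)) ->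
  hoare B (N * c) (Inv 0) (Inv N).
Proof.
move=> body; suff iter k : k <= N -> hoare B (k * c) (Inv 0) (Inv k) by exact: iter.
elim: k => [_ s|k IHk lt_kN]; first exact: safe_run0.
by rewrite mulSnr; apply: hoare_seq (IHk (ltnW lt_kN)) (body k lt_kN).
Qed.

Definition at_mem l (M : nat -> nat) s := pc s = l /\ cells s =1 M.

Lemma hoare_at B n l M l' M' :
  safe_run B n (at_mem l' M') (State l M) -> hoare B n (at_mem l M) (at_mem l' M').
Proof.
move=> [[pc_n mem_n] bnd] [l0 m] [/= -> eq_m].
have ext k := run_ext k (erefl : pc (State l m) = pc (State l M)) eq_m.
split; first by split=> [|x]; rewrite ?(ext n).1 ?(ext n).2.
by move=> k /bnd bnd_k x; rewrite (ext k).2.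
Qed.

End Run.

(* Addresses 0-5 set up the constants, 6-9 loop to compute g^(p-2) mod p^2 in
   cell 7, 10-19 derive g^p mod p^2 (cell 7) and g^(p-2) mod p (cell 8), and
   20-33 loop over j, keeping g^j mod p, g^(pj) mod p^2 and g^((p-2)j) mod p in
   cells 9, 10 and 13 and storing the entry for x = g^j mod p at address
   20 + x, the base 20 being held in cell 2; address 34 halts. *)
Definition fq_program : seq instr := [::
  IConst 2 20; IOp OMul 3 0 0; IConst 4 1; IConst 7 1; IOp OSub 6 0 4; IOp OSub 6 6 4;
  IOp OMul 7 7 1; IOp OMod 7 7 3; IOp OAdd 5 5 4; IJlt 5 6 6;
  IOp OMod 8 7 0; IOp OMul 7 7 1; IOp OMod 7 7 3; IOp OMul 7 7 1; IOp OMod 7 7 3;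
  IConst 13 1; IConst 9 1; IConst 10 1; IConst 5 0; IOp OSub 6 0 4;
  IOp OSub 11 10 9; IOp ODiv 11 11 0; IOp OMul 11 11 13; IOp OMod 11 11 0;
  IOp OAdd 12 2 9; IStore 12 11; IOp OMul 9 9 1; IOp OMod 9 9 0;
  IOp OMul 10 10 7; IOp OMod 10 10 3; IOp OMul 13 13 8; IOp OMod 13 13 0;
  IOp OAdd 5 5 4; IJlt 5 6 20; IHalt].

Section Program.
Variables p g : nat.
Hypotheses (pr_p : prime p) (g_gt1 : 1 < g) (g_lt_p : g < p).

Let p_gt2 : 2 < p := leq_ltn_trans g_gt1 g_lt_p.
Let co_gp : coprime g p.
Proof. by rewrite coprime_sym prime_coprime // (gtnNdvd (ltnW g_gt1) g_lt_p). Qed.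

Local Arguments modn : simpl never.
Local Arguments divn : simpl never.
Local Arguments upd m a v x /.

Definition power_mem i (a : nat) : nat :=
  match a with
  | 0 => p | 1 => g | 2 => 20 | 3 => p * p | 4 => 1 | 5 => i | 6 => p - 2
  | 7 => g ^ i %% (p * p) | _ => 0
  end.

Let B := p ^ 4.

Lemma B_sqr : B = p * p * (p * p).
Proof. by rewrite /B !expnS expn0 muln1 !mulnA. Qed.

Lemma le_sqr_B x : x <= p * p -> x <= B.
Proof. by move=> le_x; rewrite B_sqr (leq_trans le_x) // leq_pmulr // muln_gt0; lia. Qed.

Lemma mul_le_B x y : x <= p * p -> y <= p * p -> x * y <= B.
Proof. by move=> le_x le_y; rewrite B_sqr leq_mul. Qed.

Lemma le_p_sqr x : x <= p -> x <= p * p.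
Proof. by move=> le_x; apply: leq_trans le_x _; rewrite leq_pmulr //; lia. Qed.

Lemma modp_lt n : n %% p < p.
Proof. by rewrite ltn_mod; lia. Qed.

Lemma modp_le_sqr n : n %% p <= p * p.
Proof. exact/le_p_sqr/ltnW/modp_lt. Qed.

Lemma modsqr_le_sqr n : n %% (p * p) <= p * p.
Proof. by apply/ltnW; rewrite ltn_mod; nia. Qed.

Lemma sub_le_sqr x y : x <= p * p -> x - y <= p * p.
Proof. by move=> le_x; apply: leq_trans le_x; exact: leq_subr. Qed.

Lemma div_le_sqr x d : x <= p * p -> x %/ d <= p * p.
Proof. by move=> le_x; apply: leq_trans le_x; exact: leq_div. Qed.

Lemma addr_le_B x : x < p -> 20 + x <= B.
Proof.
move=> lt_x; have sqr_ge9 := leq_mul p_gt2 p_gt2.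
have := leq_mul sqr_ge9 (leq_mul p_gt2 (leqnn p)); rewrite B_sqr; lia.
Qed.

Lemma const_le_B n : n <= 20 -> n <= B.
Proof.
by move=> le_n; apply: leq_trans le_n _; rewrite -[20]addn0 addr_le_B //; lia.
Qed.

Lemma fermat_quotient_le_sqr u : fermat_quotient p u <= p * p.
Proof. by apply/le_p_sqr/ltnW/fermat_quotient_ltn; lia. Qed.

Ltac bound_sqr := first
  [ exact: modsqr_le_sqr | exact: modp_le_sqr | exact: fermat_quotient_le_sqr
  | apply: sub_le_sqr; bound_sqr | apply: div_le_sqr; bound_sqr
  | apply: le_p_sqr; lia ].

Ltac bound := first
  [ by apply: const_le_B | apply: addr_le_B; exact: modp_lt
  | apply: mul_le_B; bound_sqr | apply: le_sqr_B; bound_sqr ].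

Ltac mem_bound base := repeat (apply: upd_bounded; last by bound); exact: base.

Lemma power_mem_bounded i : i <= p - 2 -> bounded B (power_mem i).
Proof. by move=> le_i [|[|[|[|[|[|[|[|a]]]]]]]] /=; bound. Qed.

Ltac symbolic_run base :=
  repeat (apply: safe_runS; [mem_bound base | rewrite /next /=]); apply: safe_run0.

Lemma prologue_spec :
  hoare fq_program B 6 (at_mem 0 (cells (init p g))) (at_mem 6 (power_mem 0)).
Proof.
(* The initial memory unifies with two updates of the zero memory. *)
apply: hoare_at; symbolic_run (fun a : nat => leq0n B); split=> // a /=.
case: a => [|[|[|[|[|[|[|[|a]]]]]]]] //=; first by rewrite -subnDA.
by rewrite expn0 modn_small //; nia.
Qed.

Definition power_inv i := at_mem (if i < p - 2 then 6 else 10) (power_mem i).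

Lemma power_step i : i < p - 2 -> hoare fq_program B 4 (power_inv i) (power_inv i.+1).
Proof.
move=> lt_i; rewrite /power_inv lt_i; apply: hoare_at.
symbolic_run (power_mem_bounded (ltnW lt_i)); split=> [|a]; rewrite /= addn1 //.
by case: a => [|[|[|[|[|[|[|[|a]]]]]]]] //=; rewrite modnMml expnSr.
Qed.

Definition table i a :=
  if a \in [seq 20 + g ^ j %% p | j <- iota 0 i] then fermat_quotient p (a - 20) else 0.

Definition table_mem i (a : nat) : nat :=
  match a with
  | 0 => p | 1 => g | 2 => 20 | 3 => p * p | 4 => 1 | 5 => i | 6 => p.-1
  | 7 => g ^ p %% (p * p) | 8 => g ^ (p - 2) %% p
  | 9 => g ^ i %% p | 10 => g ^ (p * i) %% (p * p)
  (* cells 11 and 12 still hold the scratch values of the previous round *)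
  | 11 => if i is j.+1 then fermat_quotient p (g ^ j %% p) else 0
  | 12 => if i is j.+1 then 20 + g ^ j %% p else 0
  | 13 => g ^ ((p - 2) * i) %% p
  | _ => table i a
  end.

Lemma table_succ i a : table i.+1 a =
  if a == 20 + g ^ i %% p then fermat_quotient p (g ^ i %% p) else table i a.
Proof.
rewrite /table -[i.+1]addn1 iotaD map_cat mem_cat mem_seq1 add0n.
by case: eqP => [->|_]; rewrite ?orbT ?orbF // addKn.
Qed.

Lemma table_mem_bounded i : i <= p.-1 -> bounded B (table_mem i).
Proof.
move=> le_i; case=> [|[|[|[|[|[|[|[|[|[|[|[|[|[|a]]]]]]]]]]]]]] /=; try bound.
- by case: i le_i => *; bound.
- by case: i le_i => *; bound.
- by rewrite /table; case: ifP => _; bound.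
Qed.

Lemma table_setup_spec :
  hoare fq_program B 10 (at_mem 10 (power_mem (p - 2))) (at_mem 20 (table_mem 0)).
Proof.
apply: hoare_at; symbolic_run (power_mem_bounded (leqnn _)); split=> // a /=.
have sqr_gt1 : 1 < p * p by nia.
case: a => [|[|[|[|[|[|[|[|[|[|[|[|[|[|a]]]]]]]]]]]]]] //=.
- by rewrite subn1.
- rewrite modnMml -mulnA modnMml mulnA -!expnSr.
  by have -> : (p - 2).+2 = p by lia.
- exact/modn_dvdm/dvdn_mull.
- by rewrite expn0 modn_small //; lia.
- by rewrite muln0 expn0 modn_small.
- by rewrite muln0 expn0 modn_small //; lia.
Qed.

Definition table_inv i := at_mem (if i < p.-1 then 20 else 34) (table_mem i).

Lemma table_step i : i < p.-1 -> hoare fq_program B 14 (table_inv i) (table_inv i.+1).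
Proof.
move=> lt_i; rewrite /table_inv lt_i; apply: hoare_at.
symbolic_run (table_mem_bounded (ltnW lt_i)); split=> [|a /=]; first by rewrite /= addn1.
have [lt_a | ge_a] := ltnP a 14.
  have lt_a20 : a < 20 by lia.
  rewrite (ltn_eqF (ltn_addr _ lt_a20)).
  case: a lt_a {lt_a20} => [|[|[|[|[|[|[|[|[|[|[|[|[|[|a]]]]]]]]]]]]]] //= _.
  - by rewrite addn1.
  - by rewrite modnMml -expnSr.
  - by rewrite modnMm -expnD mulnSr.
  - exact: fermat_quotient_power.
  - by rewrite modnMm -expnD mulnSr.
case: a ge_a => [|[|[|[|[|[|[|[|[|[|[|[|[|[|a]]]]]]]]]]]]]] // _ /=.
by rewrite table_succ fermat_quotient_power.
Qed.

Lemma fq_program_spec :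
  hoare fq_program B (6 + ((p - 2) * 4 + (10 + p.-1 * 14)))
    (at_mem 0 (cells (init p g))) (at_mem 34 (table_mem p.-1)).
Proof.
have power_loop : hoare fq_program B ((p - 2) * 4)
    (at_mem 6 (power_mem 0)) (at_mem 10 (power_mem (p - 2))).
  by have := hoare_iter power_step; rewrite /power_inv ltnn subn_gt0 p_gt2.
have table_loop : hoare fq_program B (p.-1 * 14)
    (at_mem 20 (table_mem 0)) (at_mem 34 (table_mem p.-1)).
  have p1_gt0 : 0 < p.-1 by lia.
  by have := hoare_iter table_step; rewrite /table_inv ltnn p1_gt0.
apply: hoare_seq prologue_spec (hoare_seq power_loop _).
exact: hoare_seq table_setup_spec table_loop.
Qed.

Lemma table_complete u : primitive_root_mod p g -> u < p.-1 ->
  table p.-1 (20 + u) = fermat_quotient p u.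
Proof.
move=> pr_g lt_u; rewrite /table addKn.
have -> : [seq 20 + g ^ j %% p | j <- iota 0 p.-1]
    = map (addn 20) [seq g ^ j %% p | j <- iota 0 p.-1] by rewrite -map_comp.
rewrite mem_map; last exact: addnI.
rewrite primitive_root_powers // mem_iota add1n (prednK (prime_gt0 pr_p)).
have [-> | _] := posnP u; first by rewrite /fermat_quotient dvdn0.
by rewrite (leq_trans lt_u (leq_pred p)).
Qed.

End Program.

Theorem theorem5 :
  exists (P : seq instr) (C D : nat),
    forall p g : nat,
      prime p -> 1 < g -> g < p -> primitive_root_mod p g ->
      exists n : nat,
        [/\ n <= C * p,
            step P (run P n (init p g)) = None,
            (forall k a, k <= n -> cells (run P k (init p g)) a <= p ^ D)
          & (forall u, u < p.-1 ->
               cells (run P n (init p g)) (cells (run P n (init p g)) 2 + u)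
               = fermat_quotient p u)].
Proof.
exists fq_program, 18, 4 => p g pr_p g_gt1 g_lt_p pr_g.
have init_at : at_mem 0 (cells (init p g)) (init p g) by [].
have [[pc_end mem_end] bnd] := fq_program_spec pr_p g_gt1 g_lt_p init_at.
exists (6 + ((p - 2) * 4 + (10 + p.-1 * 14))); split.
- by have := leq_ltn_trans g_gt1 g_lt_p; lia.
- by rewrite /step pc_end.
- move=> k a; rewrite leq_eqVlt => /predU1P [-> | /bnd //].
  by rewrite mem_end; apply: table_mem_bounded.
- by move=> u lt_u; rewrite !mem_end; apply: table_complete.
Qed.
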